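(* Let $m,p\ge1$, matrices in $\mathbb{R}^{m\times p}$ being viewed as $m$-tuples of slices $P^{(1)},\dots,P^{(m)}\in\mathbb{R}^p$ with Frobenius inner product $\langle\cdot,\cdot\rangle$ and Frobenius norm $\|\cdot\|$. Let $f:\mathbb{R}^{m\times p}\to\mathbb{R}$ be differentiable, fix $\theta\in\mathbb{R}^{m\times p}$ with all slices $\theta^{(j)}\ne0$, and let $\xi$ be a random matrix in $\mathbb{R}^{m\times p}$ with $\mathbb{E}[\xi]=0$ (integrable). Set the stochastic gradient $\tilde g=\nabla f(\theta)+\xi$. Assume that almost surely every slice $\tilde g^{(j)}\ne0$ and the angle $\phi^{(j)}$ between $\tilde g^{(j)}$ and $\theta^{(j)}$ satisfies $\sin(\phi^{(j)})\ge\gamma$ for a constant $\gamma>0$, for all $j$. Define slice-wise $\hat\theta^{(j)}=\theta^{(j)}/\|\theta^{(j)}\|$, $v^{(j)}=\tilde g^{(j)}-\langle\tilde g^{(j)},\hat\theta^{(j)}\rangle\hat\theta^{(j)}$, $\hat v^{(j)}=v^{(j)}/\|v^{(j)}\|$. Then $$\mathbb{E}_{\xi}\big[\langle \tilde g,\hat v\rangle\big]\ \ge\ \gamma\,\|\nabla f(\theta)\|.$$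
   Context: Stochastic version of the simplified Mano step (no momentum, static Oblique manifold normalization over the $m$ slices), where the update direction $\hat v$ is built from the stochastic gradient $\tilde g$, an unbiased estimator of $\nabla f(\theta)$. *)

From HB Require Import structures.
From mathcomp Require Import all_boot all_order all_algebra.
From mathcomp Require Import all_classical all_reals all_analysis.
Set Implicit Arguments. Unset Strict Implicit. Unset Printing Implicit Defensive.
Import Order.TTheory GRing.Theory Num.Theory.
Import numFieldNormedType.Exports.
Local Open Scope ring_scope.

Definition frob_dot {R : realType} {m p : nat} (A B : 'M[R]_(m, p)) : R :=
  \sum_(i < m) \sum_(j < p) A i j * B i j.
Definition frob_norm {R : realType} {m p : nat} (A : 'M[R]_(m, p)) : R :=
  Num.sqrt (frob_dot A A).

Definition slice {R : realType} {m p : nat} (A : 'M[R]_(m, p)) (j : 'I_m) : 'rV[R]_p :=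
  row j A.

Definition angle {R : realType} {p : nat} (u w : 'rV[R]_p) : R :=
  acos (frob_dot u w / (frob_norm u * frob_norm w)).

Definition grad {R : realType} {m p : nat} (f : 'M[R]_(m, p) -> R) (th : 'M[R]_(m, p))
  : 'M[R]_(m, p) := \matrix_(i, j) ('D_(delta_mx i j) f th).

Definition vhat {R : realType} {m p : nat} (g th : 'M[R]_(m, p)) : 'M[R]_(m, p) :=
  \matrix_(j, k)
    (let thh := (frob_norm (slice th j))^-1 *: slice th j in
     let v := slice g j - frob_dot (slice g j) thh *: thh in
     ((frob_norm v)^-1 *: v) 0 k).

From HB Require Import structures.
From mathcomp Require Import all_boot all_order all_algebra.
From mathcomp Require Import all_classical all_reals all_analysis.
From mathcomp Require Import ring lra measurable_realfun.
Import Order.TTheory GRing.Theory Num.Theory.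
Import numFieldNormedType.Exports.
Local Open Scope ring_scope.

(* On each slice, <g~, vhat> = |v| = |g~| sin(phi) >= gamma |g~| >= gamma <g~, u>,
   where u is the normalized slice of grad f(theta) (Cauchy-Schwarz).  This lower
   bound is affine in the noise, so its expectation is gamma times the sum of the
   slice norms of grad f(theta), which dominates gamma |grad f(theta)|. *)

(* [normalize 0 = 0], as [0^-1 = 0]. *)
Definition normalize {R : realType} {m p : nat} (A : 'M[R]_(m, p)) : 'M[R]_(m, p) :=
  (frob_norm A)^-1 *: A.

Definition orth_proj {R : realType} {m p : nat} (g u : 'M[R]_(m, p)) : 'M[R]_(m, p) :=
  g - frob_dot g u *: u.

Section FrobeniusGeometry.
Context {R : realType} {m p : nat}.
Implicit Types (a : R) (A B C g u : 'M[R]_(m, p)).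

Lemma frob_dotC A B : frob_dot A B = frob_dot B A.
Proof. by apply: eq_bigr => i _; apply: eq_bigr => j _; rewrite mulrC. Qed.

Lemma frob_dotDl A B C : frob_dot (A + B) C = frob_dot A C + frob_dot B C.
Proof.
rewrite /frob_dot -big_split; apply: eq_bigr => i _.
by rewrite -big_split; apply: eq_bigr => j _; rewrite !mxE mulrDl.
Qed.

Lemma frob_dotZl a A B : frob_dot (a *: A) B = a * frob_dot A B.
Proof.
rewrite /frob_dot mulr_sumr; apply: eq_bigr => i _.
by rewrite mulr_sumr; apply: eq_bigr => j _; rewrite !mxE mulrA.
Qed.

Lemma frob_dotBl A B C : frob_dot (A - B) C = frob_dot A C - frob_dot B C.
Proof. by rewrite -scaleN1r frob_dotDl frob_dotZl mulN1r. Qed.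

Lemma frob_dotZr a A B : frob_dot A (a *: B) = a * frob_dot A B.
Proof. by rewrite frob_dotC frob_dotZl frob_dotC. Qed.

Lemma frob_dotBr A B C : frob_dot A (B - C) = frob_dot A B - frob_dot A C.
Proof. by rewrite frob_dotC frob_dotBl !(frob_dotC A). Qed.

Lemma frob_dot0r A : frob_dot A 0 = 0.
Proof. by rewrite -(scale0r 0) frob_dotZr mul0r. Qed.

Lemma frob_dotxx_ge0 A : 0 <= frob_dot A A.
Proof. by apply: sumr_ge0 => i _; apply: sumr_ge0 => j _; exact: sqr_ge0. Qed.

Lemma frob_dotxx_eq0 A : (frob_dot A A == 0) = (A == 0).
Proof.
apply/eqP/eqP => [AA0|->]; last by rewrite frob_dot0r.
have row0 := psumr_eq0P (fun i _ => sumr_ge0 _ (fun j _ => sqr_ge0 (A i j))) AA0.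
apply/matrixP => i j; rewrite mxE; apply/eqP; rewrite -sqrf_eq0.
by rewrite (psumr_eq0P (fun j _ => sqr_ge0 (A i j)) (row0 i isT)).
Qed.

Lemma frob_norm_ge0 A : 0 <= frob_norm A.
Proof. exact: sqrtr_ge0. Qed.

Lemma frob_normE A : frob_norm A ^+ 2 = frob_dot A A.
Proof. by rewrite sqr_sqrtr // frob_dotxx_ge0. Qed.

Lemma frob_norm_gt0 A : A != 0 -> 0 < frob_norm A.
Proof.
by rewrite sqrtr_gt0 lt_def frob_dotxx_ge0 frob_dotxx_eq0 andbT.
Qed.

Lemma frob_dot_normalize A : frob_dot A (normalize A) = frob_norm A.
Proof.
rewrite frob_dotZr -frob_normE; have [->|nA0] := eqVneq (frob_norm A) 0.
  by rewrite invr0 mul0r.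
by rewrite expr2 mulrA mulVf // mul1r.
Qed.

Lemma frob_dot_normalizexx A : A != 0 -> frob_dot (normalize A) (normalize A) = 1.
Proof.
move=> /frob_norm_gt0 nA_gt0.
by rewrite frob_dotZl frob_dotZr -frob_normE; field; rewrite gt_eqF.
Qed.

Section UnitVector.
Variable u : 'M[R]_(m, p).
Hypothesis u_unit : frob_dot u u = 1.

Lemma frob_dot_orth_proj g :
  frob_dot g (orth_proj g u) = frob_dot (orth_proj g u) (orth_proj g u).
Proof.
rewrite /orth_proj !(frob_dotBl, frob_dotBr, frob_dotZl, frob_dotZr) u_unit.
by rewrite (frob_dotC u g); ring.
Qed.

Lemma frob_dot_orth_projxx g :
  frob_dot (orth_proj g u) (orth_proj g u) = frob_dot g g - frob_dot g u ^+ 2.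
Proof.
rewrite /orth_proj !(frob_dotBl, frob_dotBr, frob_dotZl, frob_dotZr) u_unit.
by rewrite (frob_dotC u g); ring.
Qed.

Lemma frob_dot_unit_le g : frob_dot g u <= frob_norm g.
Proof.
have CS : frob_dot g u ^+ 2 <= frob_dot g g.
  by rewrite -subr_ge0 -frob_dot_orth_projxx frob_dotxx_ge0.
by rewrite (le_trans (ler_norm _)) // -sqrtr_sqr ler_sqrt ?frob_dotxx_ge0.
Qed.

Lemma frob_dot_normalize_orth_proj g :
  frob_dot g (normalize (orth_proj g u)) = frob_norm (orth_proj g u).
Proof. by rewrite frob_dotZr frob_dot_orth_proj -frob_dotZr frob_dot_normalize. Qed.

End UnitVector.

Lemma frob_dot_normalize_le g A : frob_dot g (normalize A) <= frob_norm g.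
Proof.
have [->|A0] := eqVneq A 0; last exact/frob_dot_unit_le/frob_dot_normalizexx.
by rewrite /normalize scaler0 frob_dot0r frob_norm_ge0.
Qed.

End FrobeniusGeometry.

Lemma norm_orth_proj_angle (R : realType) (p : nat) (g t : 'rV[R]_p) :
  g != 0 -> t != 0 ->
  frob_norm (orth_proj g (normalize t)) = frob_norm g * sin (angle g t).
Proof.
move=> /frob_norm_gt0 g_gt0 /[dup] t0 /frob_norm_gt0 t_gt0.
set c := frob_dot g t / (frob_norm g * frob_norm t).
have gt_c : frob_dot g (normalize t) = c * frob_norm g.
  by rewrite frob_dotZr /c; field; rewrite !gt_eqF.
have vv : frob_dot (orth_proj g (normalize t)) (orth_proj g (normalize t))
    = frob_norm g ^+ 2 * (1 - c ^+ 2).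
  by rewrite frob_dot_orth_projxx ?frob_dot_normalizexx // gt_c -frob_normE; ring.
have c_ge : 0 <= 1 - c ^+ 2.
  by rewrite -(pmulr_rge0 _ (exprn_gt0 2 g_gt0)) -vv frob_dotxx_ge0.
rewrite /angle -/c sin_acos; last by apply/andP; split; nra.
by rewrite /frob_norm vv sqrtrM ?sqr_ge0 // sqrtr_sqr ger0_norm // frob_norm_ge0.
Qed.

Lemma sum_sqr_le_sqr_sum (R : realDomainType) (I : Type) (s : seq I) (F : I -> R) :
  (forall i, 0 <= F i) -> \sum_(i <- s) F i ^+ 2 <= (\sum_(i <- s) F i) ^+ 2.
Proof.
move=> F_ge0; elim: s => [|i s IHs]; first by rewrite !big_nil expr0n.
rewrite !big_cons; have S_ge0 : 0 <= \sum_(j <- s) F j by exact: sumr_ge0.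
have := F_ge0 i; nra.
Qed.

Definition row_normalize {R : realType} {m p : nat} (A : 'M[R]_(m, p)) : 'M[R]_(m, p) :=
  \matrix_(j, k) normalize (slice A j) 0 k.

Section Slices.
Context {R : realType} {m p : nat}.
Implicit Types A B g th : 'M[R]_(m, p).

Lemma frob_dot_slices A B : frob_dot A B = \sum_(j < m) frob_dot (slice A j) (slice B j).
Proof.
apply: eq_bigr => j _; rewrite /frob_dot big_ord1.
by apply: eq_bigr => k _; rewrite !mxE.
Qed.

Lemma frob_norm_le_sum_slices A : frob_norm A <= \sum_(j < m) frob_norm (slice A j).
Proof.
have S_ge0 : 0 <= \sum_(j < m) frob_norm (slice A j).
  by apply: sumr_ge0 => j _; exact: frob_norm_ge0.
rewrite -(ger0_norm S_ge0) -sqrtr_sqr ler_sqrt ?sqr_ge0 // frob_dot_slices.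
under eq_bigr do rewrite -frob_normE.
exact: sum_sqr_le_sqr_sum (fun j => frob_norm_ge0 (slice A j)).
Qed.

Lemma slice_row_normalize A j : slice (row_normalize A) j = normalize (slice A j).
Proof. by apply/rowP => k; rewrite !mxE. Qed.

Lemma slice_vhat g th j :
  slice (vhat g th) j = normalize (orth_proj (slice g j) (normalize (slice th j))).
Proof. by apply/rowP => k; rewrite /slice mxE mxE. Qed.

Lemma frob_dot_row_normalize A :
  frob_dot A (row_normalize A) = \sum_(j < m) frob_norm (slice A j).
Proof.
rewrite frob_dot_slices; apply: eq_bigr => j _.
by rewrite slice_row_normalize frob_dot_normalize.
Qed.

Lemma frob_dot_vhat g th : (forall j, slice th j != 0) ->
  frob_dot g (vhat g th)
  = \sum_(j < m) frob_norm (orth_proj (slice g j) (normalize (slice th j))).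
Proof.
move=> th0; rewrite frob_dot_slices; apply: eq_bigr => j _.
by rewrite slice_vhat frob_dot_normalize_orth_proj // frob_dot_normalizexx.
Qed.

Lemma frob_dot_vhat_ge g th h (gamma : R) : 0 <= gamma ->
  (forall j, slice th j != 0) ->
  (forall j, slice g j != 0 /\ gamma <= sin (angle (slice g j) (slice th j))) ->
  gamma * frob_dot g (row_normalize h) <= frob_dot g (vhat g th).
Proof.
move=> gamma_ge0 th0 hg; rewrite frob_dot_vhat // frob_dot_slices mulr_sumr.
apply: ler_sum => j _; have [g0 sin_ge] := hg j.
rewrite slice_row_normalize norm_orth_proj_angle //.
apply: le_trans (ler_wpM2l gamma_ge0 (frob_dot_normalize_le _ _)) _.
by rewrite mulrC ler_wpM2l ?frob_norm_ge0.
Qed.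

End Slices.

Section EntrywiseMeasurable.
Context {d} {T : measurableType d} {R : realType}.

Definition entrywise_measurable {m p : nat} (X : T -> 'M[R]_(m, p)) :=
  forall i k, measurable_fun setT (fun x => X x i k).

Context {m p : nat}.
Implicit Types X Y : T -> 'M[R]_(m, p).

Lemma entrywise_measurable_cst (A : 'M[R]_(m, p)) : entrywise_measurable (fun=> A).
Proof. by move=> i k; exact: measurable_cst. Qed.

Lemma entrywise_measurableD X Y : entrywise_measurable X -> entrywise_measurable Y ->
  entrywise_measurable (fun x => X x + Y x).
Proof.
move=> mX mY i k; under eq_fun do rewrite !mxE.
exact: measurable_funD.
Qed.

Lemma entrywise_measurableB X Y : entrywise_measurable X -> entrywise_measurable Y ->
  entrywise_measurable (fun x => X x - Y x).
Proof.
move=> mX mY i k; under eq_fun do rewrite !mxE.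
exact: measurable_funB.
Qed.

Lemma entrywise_measurableZ (r : T -> R) X : measurable_fun setT r ->
  entrywise_measurable X -> entrywise_measurable (fun x => r x *: X x).
Proof.
move=> mr mX i k; under eq_fun do rewrite !mxE.
exact: measurable_funM.
Qed.

Lemma entrywise_measurable_slice X j : entrywise_measurable X ->
  entrywise_measurable (fun x => slice (X x) j).
Proof. by move=> mX i k; under eq_fun do rewrite mxE; exact: mX. Qed.

Lemma measurable_frob_dot X Y : entrywise_measurable X -> entrywise_measurable Y ->
  measurable_fun setT (fun x => frob_dot (X x) (Y x)).
Proof.
move=> mX mY; apply: measurable_sum => i; apply: measurable_sum => k.
exact: measurable_funM.
Qed.

Lemma measurable_frob_norm X : entrywise_measurable X ->
  measurable_fun setT (fun x => frob_norm (X x)).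
Proof.
move=> mX; rewrite /frob_norm.
apply: measurableT_comp; last exact: measurable_frob_dot.
exact: continuous_measurable_fun (@sqrt_continuous R).
Qed.

End EntrywiseMeasurable.

(* The inverse norms in [vhat] cancel, leaving a sum of norms of measurable maps. *)
Lemma measurable_frob_dot_vhat d (T : measurableType d) (R : realType) (m p : nat)
    (X : T -> 'M[R]_(m, p)) (th : 'M[R]_(m, p)) :
  (forall j, slice th j != 0) -> entrywise_measurable X ->
  measurable_fun setT (fun x => frob_dot (X x) (vhat (X x) th)).
Proof.
move=> th0 mX; under eq_fun do rewrite frob_dot_vhat //.
apply: measurable_sum => j; apply/measurable_frob_norm/entrywise_measurableB.
  exact: entrywise_measurable_slice.
apply: entrywise_measurableZ (entrywise_measurable_cst _).
exact/measurable_frob_dot/entrywise_measurable_cst/entrywise_measurable_slice.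
Qed.

Section IntegralFacts.
Context {d} {T : measurableType d} {R : realType} (mu : {measure set T -> \bar R}).

Lemma ae_le_integral (f g : T -> \bar R) :
  measurable_fun setT f -> measurable_fun setT g ->
  {ae mu, forall x, (f x <= g x)%E} -> (\int[mu]_x f x <= \int[mu]_x g x)%E.
Proof.
move=> mf mg fg; rewrite integralE [leRHS]integralE; apply: leeB.
- apply: ae_ge0_le_integral => //; [exact: measurable_funepos.. |].
  apply: filterS fg => x fgx _.
  by apply: (@funepos_le _ _ [set x]) => [y /[!inE] ->|]; rewrite ?inE.
- apply: ae_ge0_le_integral => //; [exact: measurable_funeneg.. |].
  apply: filterS fg => x fgx _.
  by apply: (@funeneg_le _ _ [set x]) => [y /[!inE] ->|]; rewrite ?inE.
Qed.

Context {I : Type} (s : seq I) (h : I -> T -> R).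
Hypothesis h_int : forall i, mu.-integrable setT (fun x => (h i x)%:E).

Lemma integrable_sumEFin : mu.-integrable setT (fun x => (\sum_(i <- s) h i x)%:E).
Proof. by under eq_fun do rewrite -sumEFin; exact: integrable_sum. Qed.

Lemma integral_sumEFin :
  (\int[mu]_x (\sum_(i <- s) h i x)%:E = \sum_(i <- s) \int[mu]_x (h i x)%:E)%E.
Proof. by under eq_integral do rewrite -sumEFin; exact: integral_sum. Qed.

End IntegralFacts.

Section CenteredNoise.
Context {d} {T : measurableType d} {R : realType} (P : probability T R).
Context {m p : nat} (xi : T -> 'M[R]_(m, p)).
Hypothesis xi_int : forall i j, P.-integrable setT (fun x => (xi x i j)%:E).
Hypothesis xi_mean : forall i j, (\int[P]_x (xi x i j)%:E = 0)%E.

Lemma integrable_frob_dot_entry (C : 'M[R]_(m, p)) i j :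
  P.-integrable setT (fun x => (xi x i j * C i j)%:E).
Proof. by under eq_fun do rewrite EFinM; exact: integrableZr. Qed.

Lemma integrable_frob_dot_noise (C : 'M[R]_(m, p)) :
  P.-integrable setT (fun x => (frob_dot (xi x) C)%:E).
Proof.
apply: integrable_sumEFin => i; apply: integrable_sumEFin => j.
exact: integrable_frob_dot_entry.
Qed.

Lemma integral_frob_dot_noise (C : 'M[R]_(m, p)) :
  (\int[P]_x (frob_dot (xi x) C)%:E = 0)%E.
Proof.
rewrite integral_sumEFin => [|i]; last first.
  by apply: integrable_sumEFin => j; exact: integrable_frob_dot_entry.
rewrite big1 // => i _; rewrite integral_sumEFin => [|j]; last exact: integrable_frob_dot_entry.
rewrite big1 // => j _; under eq_integral do rewrite EFinM.
by rewrite integralZr // xi_mean mul0e.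
Qed.

Lemma integrable_frob_dot_shift (A C : 'M[R]_(m, p)) :
  P.-integrable setT (fun x => (frob_dot (A + xi x) C)%:E).
Proof.
under eq_fun do rewrite frob_dotDl EFinD.
apply: integrableD => //; last exact: integrable_frob_dot_noise.
exact: finite_measure_integrable_cst.
Qed.

Lemma expectation_frob_dot_shift (A C : 'M[R]_(m, p)) :
  (\int[P]_x (frob_dot (A + xi x) C)%:E = (frob_dot A C)%:E)%E.
Proof.
under eq_integral do rewrite frob_dotDl EFinD.
rewrite integralD //; last exact: integrable_frob_dot_noise.
  rewrite integral_cst // integral_frob_dot_noise adde0.
  by rewrite [X in (_ * X)%E]probability_setT mule1.
exact: finite_measure_integrable_cst.
Qed.

End CenteredNoise.

Theorem mainTheorem2 (R : realType) (m p : nat) (hm : (0 < m)%N) (hp : (0 < p)%N)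
  (f : 'M[R]_(m, p) -> R) (th : 'M[R]_(m, p))
  (hf : differentiable f th)
  (hth : forall j : 'I_m, slice th j != 0)
  (d : measure_display) (T : measurableType d) (P : probability T R)
  (xi : T -> 'M[R]_(m, p))
  (hxi_int : forall i j, P.-integrable setT (fun x => (xi x i j)%:E))
  (hxi_mean : forall i j, (\int[P]_x (xi x i j)%:E = 0)%E)
  (gamma : R) (hgamma : 0 < gamma)
  (has : {ae P, forall x, forall j : 'I_m,
      slice (grad f th + xi x) j != 0 /\
      gamma <= sin (angle (slice (grad f th + xi x) j) (slice th j))}) :
  (\int[P]_x (frob_dot (grad f th + xi x) (vhat (grad f th + xi x) th))%:E
     >= (gamma * frob_norm (grad f th))%:E)%E.
Proof.
set G := grad f th; set U := row_normalize G.
have mxi : entrywise_measurable xi.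
  by move=> i k; apply/measurable_EFinP; exact: measurable_int (hxi_int i k).
have mg : entrywise_measurable (fun x => G + xi x).
  exact: entrywise_measurableD (entrywise_measurable_cst G) mxi.
have int_lower : P.-integrable setT (fun x => (gamma * frob_dot (G + xi x) U)%:E).
  by under eq_fun do rewrite EFinM; exact/integrableZl/integrable_frob_dot_shift.
have expect_lower : (\int[P]_x (gamma * frob_dot (G + xi x) U)%:E
    = (gamma * frob_dot G U)%:E)%E.
  under eq_integral do rewrite EFinM.
  by rewrite integralZl ?expectation_frob_dot_shift //; exact: integrable_frob_dot_shift.
apply: (@le_trans _ _ (gamma * frob_dot G U)%:E).
  rewrite lee_fin (ler_wpM2l (ltW hgamma)) // frob_dot_row_normalize.
  exact: frob_norm_le_sum_slices.
rewrite -expect_lower; apply: ae_le_integral.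
- exact: measurable_int int_lower.
- exact/measurable_EFinP/measurable_frob_dot_vhat.
- apply: filterS has => x slices_ok; rewrite lee_fin.
  exact: frob_dot_vhat_ge (ltW hgamma) hth slices_ok.
Qed.
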